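(* Let $\lambda>0$ be a real number and let $\mathbf{H}$ be the $4\times 8$ binary matrix $$\mathbf{H}=\begin{bmatrix}1&1&1&1&0&0&0&0\\0&0&1&1&1&1&0&0\\0&0&0&0&1&1&1&1\\0&1&0&1&0&1&0&1\end{bmatrix}.$$ For any $\mathbf{k}_1\in\{0,1\}^4$, let $\mathbf{v}_1:=\mathrm{Encode}_{E'_8}(\mathbf{k}_1)=\lambda\cdot(\mathbf{k}_1\mathbf{H}\bmod 2)\in[0,\lambda]^8$. For any $\mathbf{v}_2\in\mathbb{R}^8$, let $\mathbf{k}_2:=\mathrm{Decode}_{E'_8}(\mathbf{v}_2)$ (the decoding algorithm described in the context). If $\|\mathbf{v}_2-\mathbf{v}_1\|_{2\lambda,2}<\lambda$, then $\mathbf{k}_1=\mathbf{k}_2$.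
   Context: Norms: for a positive real $Q$ and $w\in\mathbb{R}$, $w\bmod^{\pm}Q$ denotes the representative of $w$ modulo $Q$ in $[-Q/2,Q/2)$, $\|w\|_{Q,\infty}:=|w\bmod^{\pm}Q|$ and $\|w\|_{Q,2}:=\|w\|_{Q,\infty}$; for a vector $\mathbf{w}=(w_0,\dots,w_{m-1})$, $\|\mathbf{w}\|_{Q,2}:=\sqrt{\sum_i\|w_i\|_{Q,\infty}^2}$. The scalable $E_8$ lattice is $E'_8=\lambda\cdot[C\cup(C+\mathbf{c})]$ where $C=\{(x_1,x_1,x_2,x_2,x_3,x_3,x_4,x_4)\in\{0,1\}^8:\sum x_i\equiv 0\bmod 2\}$ and $\mathbf{c}=(0,1,0,1,0,1,0,1)$; equivalently $E'_8=\{\lambda(\mathbf{k}\mathbf{H}\bmod 2):\mathbf{k}\in\{0,1\}^4\}$. Subroutine $\mathrm{Decode}_{C'}(\mathbf{x})$ for $\mathbf{x}=(x_0,\dots,x_7)\in\mathbb{R}^8$: set $mind:=+\infty$, $mini:=0$, $\mathsf{TotalCost}:=0$. For $i=0,\dots,3$: let $c_0:=\|x_{2i}\|_{2\lambda,2}^2+\|x_{2i+1}\|_{2\lambda,2}^2$ and $c_1:=\|x_{2i}-\lambda\|_{2\lambda,2}^2+\|x_{2i+1}-\lambda\|_{2\lambda,2}^2$; let $k_i:=\arg\min\{c_0,c_1\}\in\{0,1\}$; add $c_{k_i}$ to $\mathsf{TotalCost}$; if $c_{1-k_i}-c_{k_i}<mind$, set $mind:=c_{1-k_i}-c_{k_i}$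 and $mini:=i$. After the loop, if $k_0+k_1+k_2+k_3$ is odd, replace $k_{mini}$ by $1-k_{mini}$ and add $mind$ to $\mathsf{TotalCost}$. Output $((k_0,k_1,k_2,k_3),\mathsf{TotalCost})$. Algorithm $\mathrm{Decode}_{E'_8}(\mathbf{x})$: compute $(\mathbf{k}_0',T_0):=\mathrm{Decode}_{C'}(\mathbf{x})$ and $(\mathbf{k}_1',T_1):=\mathrm{Decode}_{C'}(\mathbf{x}-\lambda\mathbf{c})$; let $b:=\arg\min\{T_0,T_1\}$; write $\mathbf{k}'_b=(k_0,k_1,k_2,k_3)$ and output $(k_0,\,k_1\oplus k_0,\,k_3,\,b)\in\{0,1\}^4$. *)

From mathcomp Require Import all_boot all_order all_algebra.
From mathcomp Require Import reals.
Set Implicit Arguments. Unset Strict Implicit. Unset Printing Implicit Defensive.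
Import Order.TTheory GRing.Theory Num.Theory.
Local Open Scope ring_scope.

Definition key := (bool * bool * bool * bool)%type.
Definition kbit (k : key) (i : nat) : bool :=
  let: (a, b, c, d) := k in
  match i with 0 => a | 1 => b | 2 => c | _ => d end.

Definition Hrow (i : nat) : seq bool :=
  match i with
  | 0 => [:: true; true; true; true; false; false; false; false]
  | 1 => [:: false; false; true; true; true; true; false; false]
  | 2 => [:: false; false; false; false; true; true; true; true]
  | _ => [:: false; true; false; true; false; true; false; true]
  end.
Definition Hmat (i j : nat) : bool := nth false (Hrow i) j.

Section E8.
Variable R : realType.

(* w mod^{+-} Q : the representative of w modulo Q in [-Q/2, Q/2) *)
Definition modpm (Q w : R) : R := w - Q * (Num.floor (w / Q + 2^-1))%:~R.
(* ||w||_{Q,inf} = ||w||_{Q,2} for scalars *)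
Definition qnorm (Q w : R) : R := `|modpm Q w|.
Definition qnorm_vec (Q : R) (w : 'rV[R]_8) : R :=
  Num.sqrt (\sum_(i < 8) qnorm Q (w 0 i) ^+ 2).

Definition encodeE8 (lam : R) (k : key) : 'rV[R]_8 :=
  \row_(j < 8) (lam * (\big[addb/false]_(i < 4) (kbit k i && Hmat i j) : nat)%:R).

Definition ent (x : 'rV[R]_8) (n : nat) : R := x 0 (inord n).

Definition pcost (lam : R) (x : 'rV[R]_8) (i : nat) (b : bool) : R :=
  let a := if b then lam else 0 in
  qnorm (2 * lam) (ent x (2 * i) - a) ^+ 2 + qnorm (2 * lam) (ent x (2 * i + 1) - a) ^+ 2.

(* k_i := argmin{c0,c1}; ties resolved to 0 *)
Definition pbit (lam : R) (x : 'rV[R]_8) (i : nat) : bool :=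
  pcost lam x i true < pcost lam x i false.

(* loop state: (mind (None = +infinity), mini, TotalCost) *)
Definition loop_step (lam : R) (x : 'rV[R]_8)
    (st : option R * nat * R) (i : nat) : option R * nat * R :=
  let: (mind, mini, tot) := st in
  let k := pbit lam x i in
  let ck := pcost lam x i k in
  let d := pcost lam x i (~~ k) - ck in
  let better := if mind is Some m then d < m else true in
  (if better then (Some d, i) else (mind, mini), tot + ck).

Definition decodeC' (lam : R) (x : 'rV[R]_8) : key * R :=
  let: (mind, mini, tot) := foldl (loop_step lam x) (None, 0%N, 0) (iota 0 4) in
  let k0 := pbit lam x 0 in let k1 := pbit lam x 1 in
  let k2 := pbit lam x 2 in let k3 := pbit lam x 3 in
  let odd_par := k0 (+) k1 (+) k2 (+) k3 in
  let fl i b := if odd_par && (mini == i) then ~~ b else b in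
  let md := if mind is Some m then m else 0 in
  ((fl 0%N k0, fl 1%N k1, fl 2%N k2, fl 3%N k3),
   if odd_par then tot + md else tot).

Definition cvec : 'rV[R]_8 := \row_(j < 8) (odd j)%:R.

Definition decodeE8 (lam : R) (x : 'rV[R]_8) : key :=
  let: (k0', T0) := decodeC' lam x in
  let: (k1', T1) := decodeC' lam (x - lam *: cvec) in
  let b := T1 < T0 in (* argmin, ties resolved to 0 *)
  let: (a0, a1, _, a3) := if b then k1' else k0' in
  (a0, a1 (+) a0, a3, b).

End E8.

(* Write u_n (coord_dist n) for the distance, modulo 2 lam, between coordinate n
   of v2 and of the codeword v1; any other admissible value of that coordinate lies
   at distance lam - u_n.  Since sum_n u_n^2 < lam^2, Cauchy-Schwarz makes any four
   of the u_n sum to less than 2 lam.  Decode_{C'} is Wagner's decoder, hence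
   returns a cheapest even word on the four coordinate pairs.  In the coset of v1,
   flipping pair i costs 2 lam (lam - u_{2i} - u_{2i+1}), so flipping a nonempty
   even set of pairs costs a positive amount, and the decoder returns the pairs of
   v1 at cost sum u_n^2.  In the other coset every pair has one misaligned
   coordinate whatever its bit, which costs more than that.  So Decode_{E'_8}
   picks the coset and the pairs of v1, from which it reads back k1. *)

From mathcomp Require Import all_boot all_order all_algebra.
From mathcomp Require Import reals.
From mathcomp Require Import ring lra.
Set Implicit Arguments. Unset Strict Implicit. Unset Printing Implicit Defensive.
Import Order.TTheory GRing.Theory Num.Theory.
Local Open Scope ring_scope.

Section CenteredMod.
Variable R : realType.
Implicit Types (Q w r : R).

Lemma modpm_mulz_add Q (m : int) r : 0 < Q -> -(Q / 2) <= r < Q / 2 ->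
  modpm Q (Q * m%:~R + r) = r.
Proof.
move=> Q0 /andP[r_ge r_lt]; rewrite /modpm.
suff -> : Num.floor ((Q * m%:~R + r) / Q + 2^-1) = m by ring.
apply: floor_def; rewrite intrD.
have -> : (Q * m%:~R + r) / Q + 2^-1 = m%:~R + (r / Q + 2^-1).
  by field; rewrite gt_eqF.
have : -(Q / 2) / Q <= r / Q < (Q / 2) / Q.
  by rewrite ler_pM2r ?ltr_pM2r ?invr_gt0 // r_ge r_lt.
rewrite mulNr (_ : (Q / 2) / Q = 2^-1); last by field; rewrite gt_eqF.
lra.
Qed.

Lemma modpm_itv Q w : 0 < Q -> -(Q / 2) <= modpm Q w < Q / 2.
Proof.
move=> Q0; rewrite /modpm; set n := Num.floor _.
have /andP[n_le n_gt] := floor_itv (w / Q + 2^-1); rewrite -/n in n_le n_gt.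
have wE : w = Q * (w / Q) by field; rewrite gt_eqF.
have : Q * n%:~R <= Q * (w / Q + 2^-1) by rewrite ler_pM2l.
have : Q * (w / Q + 2^-1) < Q * (n%:~R + 1) by rewrite ltr_pM2l // -[1]/(1%:~R) -intrD.
rewrite !mulrDr -wE; lra.
Qed.

Lemma qnorm_itv Q w : 0 < Q -> 0 <= qnorm Q w <= Q / 2.
Proof.
move=> Q0; have := modpm_itv w Q0; rewrite /qnorm.
by case: (lerP 0 (modpm Q w)) => r0; [rewrite ger0_norm | rewrite ltr0_norm]; lra.
Qed.

Lemma qnormB_period Q w : 0 < Q -> qnorm Q (w - Q) = qnorm Q w.
Proof.
move=> Q0; rewrite /qnorm; congr `|_|.
rewrite -(@modpm_mulz_add Q (Num.floor (w / Q + 2^-1) - 1) (modpm Q w)) ?modpm_itv //.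
by congr modpm; rewrite /modpm intrD; ring.
Qed.

Lemma qnormB_half (lam w : R) : 0 < lam ->
  qnorm (2 * lam) (w - lam) = lam - qnorm (2 * lam) w.
Proof.
move=> lam0; have Q0 : 0 < 2 * lam by lra.
have := modpm_itv w Q0; rewrite /qnorm.
set n := Num.floor (w / (2 * lam) + 2^-1); set r := modpm _ w.
have wE : w = 2 * lam * n%:~R + r by rewrite /r /modpm; ring.
case: (lerP 0 r) => r0 r_itv.
  have -> : w - lam = 2 * lam * n%:~R + (r - lam) by rewrite {1}wE; ring.
  rewrite (ger0_norm r0) modpm_mulz_add //; last by apply/andP; split; lra.
  rewrite ltr0_norm; lra.
have -> : w - lam = 2 * lam * (n - 1)%:~R + (r + lam) by rewrite {1}wE intrD; ring.
rewrite (ltr0_norm r0) modpm_mulz_add //; last by apply/andP; split; lra.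
rewrite ger0_norm; lra.
Qed.

End CenteredMod.

Definition key_parity (k : key) : bool :=
  kbit k 0 (+) kbit k 1 (+) kbit k 2 (+) kbit k 3.

Lemma eq_from_kbit (k k' : key) :
  (forall i, (i < 4)%N -> kbit k i = kbit k' i) -> k = k'.
Proof.
case: k k' => [[[a b] c] d] [[[a' b'] c'] d'] eqk.
by move: (eqk 0%N) (eqk 1%N) (eqk 2%N) (eqk 3%N) => /= -> // -> // -> // -> //.
Qed.

Lemma exists_kbit_neq (k k' : key) : k != k' -> exists i : 'I_4, kbit k i != kbit k' i.
Proof.
move=> neq_kk'; apply/existsP; apply: contraNT neq_kk' => /existsPn eq_bits.
apply/eqP; apply: eq_from_kbit => i i_lt4.
by move: (eq_bits (Ordinal i_lt4)); rewrite negbK => /eqP.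
Qed.

Section WagnerDecoder.
Variables (R : realType) (lam : R) (x : 'rV[R]_8).

Definition word_cost (k : key) : R := \sum_(i < 4) pcost lam x i (kbit k i).

Definition best_key : key := (pbit lam x 0, pbit lam x 1, pbit lam x 2, pbit lam x 3).
Definition best_cost (i : nat) : R := pcost lam x i (pbit lam x i).
Definition flip_gap (i : nat) : R := pcost lam x i (~~ pbit lam x i) - best_cost i.

Lemma best_cost_le i b : best_cost i <= pcost lam x i b.
Proof. by rewrite /best_cost /pbit; case: b; case: ltrP => //= /ltW. Qed.

Lemma flip_gap_ge0 i : 0 <= flip_gap i.
Proof. by rewrite subr_ge0 best_cost_le. Qed.

Lemma pcost_best_gap i b :
  pcost lam x i b = best_cost i + (b != pbit lam x i)%:R * flip_gap i.
Proof.
by rewrite /flip_gap; case: eqP => [->|/eqP/negPf]; [|case: b; case: pbit] => /=;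
  rewrite ?mul0r ?mul1r ?addr0 ?subrKC.
Qed.

Lemma loop_stepE mi t i :
  loop_step lam x (Some (flip_gap mi), mi, t) i =
  (let mi' := if flip_gap i < flip_gap mi then i else mi in
   (Some (flip_gap mi'), mi', t + best_cost i)).
Proof. by rewrite /loop_step /=; case: ifP. Qed.

Lemma foldl_loop_step s mi t : exists mi',
  [/\ foldl (loop_step lam x) (Some (flip_gap mi), mi, t) s =
        (Some (flip_gap mi'), mi', t + \sum_(i <- s) best_cost i),
      mi' \in mi :: s &
      forall j, j \in mi :: s -> flip_gap mi' <= flip_gap j].
Proof.
elim: s mi t => [|i s IHs] mi t.
  by exists mi; rewrite big_nil addr0 mem_head; split=> // j; rewrite inE => /eqP ->.
cbn [foldl]; rewrite loop_stepE; cbv zeta; set mi1 := if _ then _ else _.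
have [mi' [-> mi'_in mi'_min]] := IHs mi1 (t + best_cost i).
have mi1_min : forall j, j \in [:: mi; i] -> flip_gap mi1 <= flip_gap j.
  move=> j; rewrite !inE /mi1 => /orP[] /eqP ->; case: ltrP => // /ltW //.
exists mi'; split.
- by rewrite big_cons -addrA.
- by move: mi'_in; rewrite !inE /mi1; case: ifP => _ /orP[] ->; rewrite ?orbT.
move=> j; rewrite !inE => /or3P[] j_eq.
- by apply: le_trans (mi1_min j _); rewrite ?inE ?j_eq // mi'_min ?mem_head.
- by apply: le_trans (mi1_min j _); rewrite ?inE ?j_eq ?orbT // mi'_min ?mem_head.
- by rewrite mi'_min // inE j_eq orbT.
Qed.

Lemma foldl_loop_step_iota : exists2 mi, (mi < 4)%N &
  foldl (loop_step lam x) (None, 0%N, 0) (iota 0 4) =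
    (Some (flip_gap mi), mi, \sum_(i < 4) best_cost i) /\
  forall j, (j < 4)%N -> flip_gap mi <= flip_gap j.
Proof.
have [mi [eq_foldl mi_in mi_min]] := foldl_loop_step [:: 1; 2; 3]%N 0 (0 + best_cost 0).
exists mi; first by move: mi_in; rewrite !inE => /or4P[] /eqP ->.
split; last by move=> j j_lt4; apply: mi_min; case: j j_lt4 => [|[|[|[|j]]]].
rewrite -(big_mkord xpredT) /index_iota subn0 [iota 0 4]/=.
by apply: etrans eq_foldl _; rewrite big_cons add0r.
Qed.

Lemma decodeC'_spec : exists2 mi, (mi < 4)%N &
  [/\ forall j, (j < 4)%N -> flip_gap mi <= flip_gap j,
      forall i, (i < 4)%N ->
        kbit (decodeC' lam x).1 i = pbit lam x i (+) (key_parity best_key && (mi == i)) &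
      (decodeC' lam x).2 = \sum_(i < 4) best_cost i + (key_parity best_key)%:R * flip_gap mi].
Proof.
have [mi mi_lt4 [eq_foldl mi_min]] := foldl_loop_step_iota.
exists mi => //; split=> //; rewrite /decodeC' eq_foldl /=.
  by case=> [|[|[|[|i]]]] //= _; case: (_ && _); case: pbit.
by rewrite /key_parity /=; case: (_ (+) _); rewrite ?mul1r ?mul0r ?addr0.
Qed.

Lemma word_cost_best_gap t : word_cost t =
  \sum_(i < 4) best_cost i + \sum_(i < 4) (kbit t i != pbit lam x i)%:R * flip_gap i.
Proof. by rewrite -big_split; apply: eq_bigr => i _; exact: pcost_best_gap. Qed.

Lemma decodeC'_even : ~~ key_parity (decodeC' lam x).1.
Proof.
have [mi mi_lt4 [_ dec_bit _]] := decodeC'_spec.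
rewrite /key_parity !dec_bit // {dec_bit} /key_parity /=.
by case: mi mi_lt4 => [|[|[|[|mi]]]] //= _;
  case: (pbit lam x 0); case: (pbit lam x 1); case: (pbit lam x 2); case: (pbit lam x 3).
Qed.

Lemma decodeC'_cost : (decodeC' lam x).2 = word_cost (decodeC' lam x).1.
Proof.
have [mi mi_lt4 [_ dec_bit ->]] := decodeC'_spec.
rewrite word_cost_best_gap; congr (_ + _).
have flipped i : (i < 4)%N -> (kbit (decodeC' lam x).1 i != pbit lam x i) = key_parity best_key && (mi == i).
  by move=> i_lt4; rewrite dec_bit // negb_eqb addbC addKb.
rewrite (bigD1 (Ordinal mi_lt4)) //= flipped // eqxx andbT big1 ?addr0 // => i.
by rewrite flipped // -val_eqE /= eq_sym => /negPf ->; rewrite andbF mul0r.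
Qed.

Lemma decodeC'_min t : ~~ key_parity t -> (decodeC' lam x).2 <= word_cost t.
Proof.
move=> t_even; have [mi mi_lt4 [mi_min _ ->]] := decodeC'_spec.
rewrite word_cost_best_gap lerD2l.
have gaps_ge0 : forall P : pred 'I_4, 0 <= \sum_(i < 4 | P i) (kbit t i != pbit lam x i)%:R * flip_gap i.
  by move=> P; apply: sumr_ge0 => i _; rewrite mulr_ge0 ?flip_gap_ge0.
case: (boolP (key_parity best_key)) => [best_odd|_]; last by rewrite mul0r (gaps_ge0 xpredT).
have [i t_i] : exists i : 'I_4, kbit t i != kbit best_key i.
  by apply: exists_kbit_neq; apply: contraNneq t_even => ->.
have t_i' : kbit t i != pbit lam x i by case: i t_i => [[|[|[|[|i]]]]].
rewrite mul1r (bigD1 i) //= t_i' mul1r.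
exact: ler_wpDr (gaps_ge0 _) (mi_min i (ltn_ord i)).
Qed.

End WagnerDecoder.

Lemma decodeC'_unique_min (R : realType) (lam : R) (x : 'rV[R]_8) (t : key) :
  ~~ key_parity t ->
  (forall t', ~~ key_parity t' -> t' != t -> word_cost lam x t < word_cost lam x t') ->
  decodeC' lam x = (t, word_cost lam x t).
Proof.
move=> t_even t_min; have dec_t : (decodeC' lam x).1 = t.
  apply/eqP; apply: contraT => dec_neq_t.
  have := t_min _ (decodeC'_even lam x) dec_neq_t.
  by rewrite -decodeC'_cost ltNge decodeC'_min.
by rewrite [decodeC' _ _]surjective_pairing decodeC'_cost dec_t.
Qed.

Lemma decodeC'_cost_ge (R : realType) (lam : R) (x : 'rV[R]_8) (L : nat -> R) :
  (forall i b, (i < 4)%N -> L i <= pcost lam x i b) ->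
  \sum_(i < 4) L i <= (decodeC' lam x).2.
Proof. by move=> L_le; rewrite decodeC'_cost; apply: ler_sum => i _; apply: L_le. Qed.

Definition e8bit (k : key) (j : nat) : bool :=
  \big[addb/false]_(i < 4) (kbit k i && Hmat i j).

Definition pair_word (k : key) : key := (e8bit k 0, e8bit k 2, e8bit k 4, e8bit k 6).

Lemma e8bit_odd k i : (i < 4)%N -> e8bit k (2 * i).+1 = e8bit k (2 * i) (+) kbit k 3.
Proof.
case: k => [[[a b] c] d]; rewrite /e8bit !big_ord_recr !big_ord0 /Hmat /=.
by case: i => [|[|[|[|i]]]] //= _; case: a; case: b; case: c; case: d.
Qed.

Lemma kbit_pair_word k i : (i < 4)%N -> kbit (pair_word k) i = e8bit k (2 * i).
Proof. by case: i => [|[|[|[|i]]]]. Qed.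

Lemma pair_word_even k : ~~ key_parity (pair_word k).
Proof.
case: k => [[[a b] c] d]; rewrite /key_parity /pair_word /e8bit /= !big_ord_recr !big_ord0 /Hmat /=.
by case: a; case: b; case: c; case: d.
Qed.

Lemma e8bit_key k : k = (e8bit k 0, e8bit k 2 (+) e8bit k 0, e8bit k 6, kbit k 3).
Proof.
case: k => [[[a b] c] d]; rewrite /e8bit !big_ord_recr !big_ord0 /Hmat /=.
by case: a; case: b; case: c; case: d.
Qed.

Lemma sum_even_flips_gt0 (R : realDomainType) (e : nat -> R) (t t' : key) :
  ~~ key_parity t -> ~~ key_parity t' -> t' != t ->
  (forall i j, (i < 4)%N -> (j < 4)%N -> i != j -> 0 < e i + e j) ->
  0 < \sum_(i < 4) (kbit t' i != kbit t i)%:R * e i.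
Proof.
move=> t_even t'_even /exists_kbit_neq[i t_i] e_pos.
have some_flip : [|| kbit t' 0 != kbit t 0, kbit t' 1 != kbit t 1,
                     kbit t' 2 != kbit t 2 | kbit t' 3 != kbit t 3].
  by case: i t_i => [[|[|[|[|i]]]]] //= _ ->; rewrite ?orbT.
have even_flips : ~~ ((kbit t' 0 != kbit t 0) (+) (kbit t' 1 != kbit t 1)
                      (+) (kbit t' 2 != kbit t 2) (+) (kbit t' 3 != kbit t 3)).
  move: t_even t'_even {t_i some_flip}; rewrite /key_parity.
  case: t t' => [[[a b] c] d] [[[a' b'] c'] d'] /=.
  by case: a; case: b; case: c; case: d; case: a'; case: b'; case: c'; case: d'.
have := e_pos 0%N 1%N isT isT isT; have := e_pos 0%N 2%N isT isT isT;
have := e_pos 0%N 3%N isT isT isT; have := e_pos 1%N 2%N isT isT isT;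
have := e_pos 1%N 3%N isT isT isT; have := e_pos 2%N 3%N isT isT isT.
move: some_flip even_flips; rewrite !big_ord_recr !big_ord0 /= add0r.
by do 4! case: (_ == _); rewrite /= ?mul1r ?mul0r ?addr0 ?add0r // => *; lra.
Qed.

Lemma sum4_lt_of_sumsqr_lt (R : realDomainType) (lam a b c d : R) : 0 < lam ->
  a ^+ 2 + b ^+ 2 + c ^+ 2 + d ^+ 2 < lam ^+ 2 -> a + b + c + d < 2 * lam.
Proof.
move=> lam_gt0 sq_lt; rewrite ltNge; apply/negP => sum_ge.
have cauchy_schwarz : (a + b + c + d) ^+ 2 <= 4 * (a ^+ 2 + b ^+ 2 + c ^+ 2 + d ^+ 2).
  have := sqr_ge0 (a - b); have := sqr_ge0 (a - c); have := sqr_ge0 (a - d);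
  have := sqr_ge0 (b - c); have := sqr_ge0 (b - d); have := sqr_ge0 (c - d).
  rewrite !expr2 => *; nra.
have : (2 * lam) ^+ 2 <= (a + b + c + d) ^+ 2 by rewrite ler_pXn2r // nnegrE; lra.
rewrite !expr2 in sq_lt cauchy_schwarz * => *; nra.
Qed.

Section E8Cosets.
Variables (R : realType) (lam : R).
Hypothesis lam_gt0 : 0 < lam.

Lemma qnormB_addb (w : R) (b c : bool) :
  qnorm (2 * lam) (w - lam * c%:R - lam * b%:R) = qnorm (2 * lam) (w - lam * (b (+) c)%:R).
Proof.
case: b; case: c; rewrite /= ?mulr1 ?mulr0 ?subr0 //.
have -> : w - lam - lam = w - 2 * lam by ring.
by rewrite qnormB_period // mulr_gt0.
Qed.

Lemma qnormB_bit (w : R) (b beta : bool) :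
  qnorm (2 * lam) (w - lam * b%:R) =
  if b == beta then qnorm (2 * lam) (w - lam * beta%:R)
  else lam - qnorm (2 * lam) (w - lam * beta%:R).
Proof.
case: b; case: beta; rewrite /= ?mulr1 ?mulr0 ?subr0 // qnormB_half //.
by rewrite opprB addrC subrK.
Qed.

Variables (v : 'rV[R]_8) (k : key).

Definition coord_dist (n : nat) : R := qnorm (2 * lam) (ent v n - lam * (e8bit k n)%:R).
Definition pair_dist (i : nat) : R := coord_dist (2 * i) ^+ 2 + coord_dist (2 * i).+1 ^+ 2.
Definition pair_dist_compl (i : nat) : R :=
  (lam - coord_dist (2 * i)) ^+ 2 + (lam - coord_dist (2 * i).+1) ^+ 2.

Definition pair_max (i : nat) : R := Num.max (coord_dist (2 * i)) (coord_dist (2 * i).+1).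

Lemma coord_dist_itv n : 0 <= coord_dist n <= lam.
Proof.
have := qnorm_itv (ent v n - lam * (e8bit k n)%:R) (mulr_gt0 (ltr0n _ 2) lam_gt0).
by rewrite (_ : 2 * lam / 2 = lam) //; field.
Qed.

Lemma pair_dist_ge0 i : 0 <= pair_dist i.
Proof. exact: addr_ge0 (sqr_ge0 _) (sqr_ge0 _). Qed.

Lemma pair_max_sqr_le i : pair_max i ^+ 2 <= pair_dist i.
Proof.
rewrite /pair_max /pair_dist.
have := sqr_ge0 (coord_dist (2 * i)); have := sqr_ge0 (coord_dist (2 * i).+1).
by case: (leP (coord_dist (2 * i)) (coord_dist (2 * i).+1)); lra.
Qed.

Lemma ent_coset (c : bool) n : (n < 8)%N ->
  ent (if c then v - lam *: cvec R else v) n = ent v n - lam * (c && odd n)%:R.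
Proof. by case: c => n_lt8 /=; rewrite ?mulr0 ?subr0 // /ent !mxE inordK. Qed.

Lemma pcost_coset (c : bool) i b : (i < 4)%N ->
  pcost lam (if c then v - lam *: cvec R else v) i b =
  (if b == e8bit k (2 * i) then coord_dist (2 * i) else lam - coord_dist (2 * i)) ^+ 2 +
  (if b (+) c == e8bit k (2 * i).+1 then coord_dist (2 * i).+1
   else lam - coord_dist (2 * i).+1) ^+ 2.
Proof.
move=> i_lt4; have [lt8 lt8'] : (2 * i < 8)%N /\ ((2 * i).+1 < 8)%N.
  by case: i i_lt4 => [|[|[|[|i]]]].
rewrite /pcost; cbv zeta.
have -> : (if b then lam else 0) = lam * b%:R by case: b; rewrite ?mulr1 ?mulr0.
rewrite addn1 !ent_coset //= oddM /= andbF andbT.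
rewrite !qnormB_addb addbF.
rewrite [qnorm _ (ent v (2 * i) - _)](qnormB_bit _ _ (e8bit k (2 * i))).
by rewrite [qnorm _ (ent v (2 * i).+1 - _)](qnormB_bit _ _ (e8bit k (2 * i).+1)).
Qed.

Lemma pcost_true_coset i b : (i < 4)%N ->
  pcost lam (if kbit k 3 then v - lam *: cvec R else v) i b =
  if b == e8bit k (2 * i) then pair_dist i else pair_dist_compl i.
Proof.
move=> i_lt4; rewrite pcost_coset // e8bit_odd //.
by case: b; case: (e8bit k _); case: (kbit k 3).
Qed.

Lemma pcost_wrong_coset i b : (i < 4)%N ->
  pair_dist i + lam ^+ 2 - 2 * lam * pair_max i <=
  pcost lam (if ~~ kbit k 3 then v - lam *: cvec R else v) i b.
Proof.
move=> i_lt4; rewrite pcost_coset // e8bit_odd //.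
have -> : (b (+) ~~ kbit k 3 == e8bit k (2 * i) (+) kbit k 3) = (b != e8bit k (2 * i)).
  by case: b; case: (e8bit k _); case: (kbit k 3).
have /andP[x_ge0 x_le] := coord_dist_itv (2 * i).
have /andP[y_ge0 y_le] := coord_dist_itv (2 * i).+1.
rewrite /pair_dist /pair_max; set x := coord_dist _; set y := coord_dist _.
have [x_max y_max] : x <= Num.max x y /\ y <= Num.max x y by rewrite !le_max !lexx orbT.
have := ler_wpM2l (ltW lam_gt0) x_max; have := ler_wpM2l (ltW lam_gt0) y_max.
by case: (_ == _) => /=; rewrite !expr2 => *; lra.
Qed.

Lemma pair_dist_sum_le i j : (i < 4)%N -> (j < 4)%N -> i != j ->
  pair_dist i + pair_dist j <= \sum_(l < 4) pair_dist l.
Proof.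
move=> i_lt4 j_lt4 ij; rewrite (bigD1 (Ordinal i_lt4)) //= (bigD1 (Ordinal j_lt4)) /=; last first.
  by rewrite -val_eqE /= eq_sym.
by rewrite addrA lerDl sumr_ge0 // => l _; apply: pair_dist_ge0.
Qed.

Lemma pair_dist_complE i : pair_dist_compl i - pair_dist i =
  2 * lam * (lam - (coord_dist (2 * i) + coord_dist (2 * i).+1)).
Proof. by rewrite /pair_dist_compl /pair_dist; ring. Qed.

Lemma two_pairs_dist_lt i j : (i < 4)%N -> (j < 4)%N -> i != j ->
  \sum_(l < 4) pair_dist l < lam ^+ 2 ->
  coord_dist (2 * i) + coord_dist (2 * i).+1 + coord_dist (2 * j) + coord_dist (2 * j).+1
  < 2 * lam.
Proof.
move=> i_lt4 j_lt4 ij dist_lt; apply: sum4_lt_of_sumsqr_lt => //.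
by have := pair_dist_sum_le i_lt4 j_lt4 ij; rewrite /pair_dist; lra.
Qed.

Lemma decodeC'_true_coset : \sum_(i < 4) pair_dist i < lam ^+ 2 ->
  decodeC' lam (if kbit k 3 then v - lam *: cvec R else v) =
  (pair_word k, \sum_(i < 4) pair_dist i).
Proof.
move=> dist_lt; set x := if _ then _ else _.
have word_costE t : word_cost lam x t = \sum_(i < 4) pair_dist i +
    \sum_(i < 4) (kbit t i != kbit (pair_word k) i)%:R * (pair_dist_compl i - pair_dist i).
  rewrite -big_split; apply: eq_bigr => i _.
  rewrite pcost_true_coset // kbit_pair_word //.
  by case: (_ == _); rewrite /= ?mul0r ?mul1r ?addr0 // addrC subrK.
have word_cost_pair_word : word_cost lam x (pair_word k) = \sum_(i < 4) pair_dist i.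
  by rewrite word_costE [X in _ + X]big1 ?addr0 // => i _; rewrite eqxx mul0r.
rewrite -word_cost_pair_word; apply: decodeC'_unique_min (pair_word_even k) _ => t t_even t_neq.
rewrite word_cost_pair_word word_costE ltrDl.
apply: (sum_even_flips_gt0 (e := fun i => pair_dist_compl i - pair_dist i) (pair_word_even k))
  => // i j i_lt4 j_lt4 ij.
have := two_pairs_dist_lt i_lt4 j_lt4 ij dist_lt.
rewrite !pair_dist_complE -mulrDr => pairs_lt; by rewrite pmulr_rgt0 ?mulr_gt0 //; lra.
Qed.

Lemma decodeC'_wrong_coset_gt : \sum_(i < 4) pair_dist i < lam ^+ 2 ->
  \sum_(i < 4) pair_dist i < (decodeC' lam (if ~~ kbit k 3 then v - lam *: cvec R else v)).2.
Proof.
move=> dist_lt.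
have cost_ge := decodeC'_cost_ge (fun i b i_lt4 => pcost_wrong_coset b i_lt4).
apply: lt_le_trans cost_ge.
have max_sum_lt : pair_max 0 + pair_max 1 + pair_max 2 + pair_max 3 < 2 * lam.
  apply: sum4_lt_of_sumsqr_lt => //; apply: le_lt_trans dist_lt.
  have := pair_max_sqr_le 0; have := pair_max_sqr_le 1.
  have := pair_max_sqr_le 2; have := pair_max_sqr_le 3.
  by rewrite !big_ord_recr big_ord0 /= add0r; lra.
have : 0 < lam * (2 * lam - (pair_max 0 + pair_max 1 + pair_max 2 + pair_max 3)).
  by rewrite mulr_gt0 // subr_gt0.
by rewrite !big_ord_recr !big_ord0 /= !add0r => *; lra.
Qed.

End E8Cosets.

Lemma qnorm_vec_encode (R : realType) (lam : R) (v : 'rV[R]_8) (k : key) :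
  qnorm_vec (2 * lam) (v - encodeE8 lam k) = Num.sqrt (\sum_(j < 8) coord_dist lam v k j ^+ 2).
Proof. by congr Num.sqrt; apply: eq_bigr => j _; rewrite /coord_dist /ent !mxE inord_val. Qed.

Lemma sum_pair_dist (R : realType) (lam : R) (v : 'rV[R]_8) (k : key) :
  \sum_(i < 4) pair_dist lam v k i = \sum_(j < 8) coord_dist lam v k j ^+ 2.
Proof. by rewrite !big_ord_recr !big_ord0 /= /pair_dist !add0r !addrA. Qed.

Theorem theorem1 (R : realType) (lam : R) (hlam : 0 < lam)
    (k1 : key) (v2 : 'rV[R]_8) :
  qnorm_vec (2 * lam) (v2 - encodeE8 lam k1) < lam ->
  k1 = decodeE8 lam v2.
Proof.
move=> close.
have dist_lt : \sum_(i < 4) pair_dist lam v2 k1 i < lam ^+ 2.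
  by rewrite sum_pair_dist -ltr_sqrt ?exprn_gt0 // sqrtr_sqr gtr0_norm // -qnorm_vec_encode.
have true_dec := decodeC'_true_coset hlam dist_lt.
have wrong_gt := decodeC'_wrong_coset_gt hlam dist_lt.
rewrite /decodeE8 {1}(e8bit_key k1).
case: (kbit k1 3) true_dec wrong_gt => /= -> ; case: (decodeC' _ _) => [k' T] /= T_gt.
  by rewrite T_gt.
by rewrite ltNge (ltW T_gt).
Qed.
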